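(* Fix a parameter space with metric $d$, a data space $X$, an update rule $g$, initial parameters $\mathbf{w}_0$, $\epsilon>0$, a set of parameters $W$ and a dataset $D'$. Suppose that for all $\mathbf{w}\in W$ and $\mathbf{x}\in X$ there exists $\mathbf{x}_i\in D'$ with $d(g(\mathbf{w},\mathbf{x}),g(\mathbf{w},\mathbf{x}_i))\le\epsilon$. Then for every dataset $D\subseteq X$ with $H_{D,g,d,0}(\mathbf{w})\subseteq W$, $D'$ forges $D$ with $\epsilon$.
   Context: A valid $(g,d,\epsilon)$ log is a sequence $\{(\mathbf{w}_i,\mathbf{x}_i)\}_{i\in J}$ ($J$ a countable index set, consecutive indices) such that $d(\mathbf{w}_{i+1}, g(\mathbf{w}_i,\mathbf{x}_i))\le \epsilon$ for all $i\in J$. For a dataset $D$, $H_{D,g,d,\epsilon}$ is the set of all valid $(g,d,\epsilon)$ logs starting from $\mathbf{w}_0$ whose data points lie in $D$, and $H_{D,g,d,0}(\mathbf{w})$ is the set of all parameters appearing in logs of $H_{D,g,d,0}$. $D'$ forges $D$ with $\epsilon$ if there is a map $B: H_{D,g,d,0}\to H_{D',g,d,\epsilon}$ with $B(\{(\mathbf{w}_i,\mathbf{x}_i)\}_{i\in J})=\{(\mathbf{w}_i,\tilde{\mathbf{x}}_i)\}_{i\in J}$, $\tilde{\mathbf{x}}_i\in D'$, whose output is a valid $(g,d,\epsilon)$ log. *)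

From Stdlib Require Import Reals.
Open Scope R_scope.
Set Implicit Arguments.

Record is_metric (P : Type) (d : P -> P -> R) : Prop := {
  metric_nonneg : forall a b, 0 <= d a b;
  metric_eq0 : forall a b, d a b = 0 <-> a = b;
  metric_sym : forall a b, d a b = d b a;
  metric_triangle : forall a b c, d a c <= d a b + d b c
}.

(* A log {(w_i, x_i)}_{i in J}, with J = {0,...,n-1} (len = Some n) or
   J = nat (len = None): consecutive indices starting at 0. Values of
   lw / lx outside J are irrelevant. *)
Record log (P X : Type) := mkLog {
  len : option nat;
  lw : nat -> P;
  lx : nat -> X
}.

Definition in_J (P X : Type) (L : log P X) (i : nat) : Prop :=
  match len L with Some n => (i < n)%nat | None => True end.

Definition valid_log (P X : Type) (g : P -> X -> P) (d : P -> P -> R) (eps : R)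
  (L : log P X) : Prop :=
  forall i, in_J L i -> in_J L (S i) -> d (lw L (S i)) (g (lw L i) (lx L i)) <= eps.

Definition H (P X : Type) (w0 : P) (D : X -> Prop) (g : P -> X -> P)
  (d : P -> P -> R) (eps : R) (L : log P X) : Prop :=
  valid_log g d eps L /\ lw L 0 = w0 /\ (forall i, in_J L i -> D (lx L i)).

Definition H_params (P X : Type) (w0 : P) (D : X -> Prop) (g : P -> X -> P)
  (d : P -> P -> R) (w : P) : Prop :=
  exists L i, H w0 D g d 0 L /\ in_J L i /\ lw L i = w.

Definition forges (P X : Type) (w0 : P) (g : P -> X -> P) (d : P -> P -> R)
  (D' D : X -> Prop) (eps : R) : Prop :=
  exists B : log P X -> log P X,
    forall L, H w0 D g d 0 L ->
      len (B L) = len L /\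
      (forall i, in_J L i -> lw (B L) i = lw L i) /\
      (forall i, in_J L i -> D' (lx (B L) i)) /\
      H w0 D' g d eps (B L).

(* Replace every data point x_i of an exact log by a point x~_i of D' whose update
   g(w_i, x~_i) lies within eps of g(w_i, x_i) = w_{i+1}; the parameters are kept, so by
   the triangle inequality the new log is eps-valid.  Closeness is only needed at the
   parameters w_i, which are exactly the elements of H_{D,g,d,0}(w). *)

From Stdlib Require Import Reals.
From Stdlib Require Import ClassicalEpsilon Lra.
Open Scope R_scope.

Section Forging.

Variables (P X : Type) (d : P -> P -> R) (g : P -> X -> P).

Definition forge_log (f : P -> X -> X) (L : log P X) : log P X :=
  mkLog (len L) (lw L) (fun i => f (lw L i) (lx L i)).

Lemma valid_log_forge_log (eps : R) (f : P -> X -> X) (L : log P X) :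
  is_metric d -> valid_log g d 0 L ->
  (forall i, in_J L i -> d (g (lw L i) (lx L i)) (g (lw L i) (f (lw L i) (lx L i))) <= eps) ->
  valid_log g d eps (forge_log f L).
Proof.
  intros Hd Hexact Hnear i Hi Hi1; simpl.
  pose proof (metric_triangle Hd (lw L (S i)) (g (lw L i) (lx L i))
                (g (lw L i) (f (lw L i) (lx L i)))) as Htri.
  pose proof (Hexact i Hi Hi1); pose proof (Hnear i Hi); lra.
Qed.

Lemma H_params_lw {w0 : P} {D : X -> Prop} {L : log P X} {i : nat} :
  H w0 D g d 0 L -> in_J L i -> H_params w0 D g d (lw L i).
Proof. intros HL Hi; exists L, i; auto. Qed.

Lemma forges_of_nearby_data (w0 : P) (eps : R) (D D' : X -> Prop) :
  is_metric d ->
  (forall w x, H_params w0 D g d w -> D x -> exists xi, D' xi /\ d (g w x) (g w xi) <= eps) ->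
  forges w0 g d D' D eps.
Proof.
  intros Hd Hnear.
  set (near w x := fun xi => D' xi /\ d (g w x) (g w xi) <= eps).
  set (f w x := epsilon (inhabits x) (near w x)).
  exists (forge_log f); intros L HL.
  assert (Hf : forall i, in_J L i -> near (lw L i) (lx L i) (f (lw L i) (lx L i))).
  { intros i Hi; apply epsilon_spec.
    apply Hnear; [apply (H_params_lw HL Hi) | apply (proj2 (proj2 HL)), Hi]. }
  destruct HL as [Hexact [Hw0 _]].
  repeat split; auto.
  - intros i Hi; apply (Hf i Hi).
  - apply valid_log_forge_log; auto.
    intros i Hi; apply (Hf i Hi).
  - intros i Hi; apply (Hf i Hi).
Qed.

End Forging.

Theorem lemma4 (P X : Type) (d : P -> P -> R) (g : P -> X -> P) (w0 : P)
  (eps : R) (W : P -> Prop) (D' : X -> Prop) :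
  is_metric d -> eps > 0 ->
  (forall (w : P) (x : X), W w -> exists xi, D' xi /\ d (g w x) (g w xi) <= eps) ->
  forall D : X -> Prop,
    (forall w, H_params w0 D g d w -> W w) ->
    forges w0 g d D' D eps.
Proof.
  intros Hd _ HW_near D Hreach.
  apply forges_of_nearby_data; [exact Hd |].
  intros w x Hw _; apply HW_near, Hreach, Hw.
Qed.
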